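(* Let $\mathcal{X},\mathcal{Y}$ be finite sets, $P$ a joint probability mass function on $\mathcal{X}\times\mathcal{Y}$ with $P(x,y)>0$ for all $(x,y)$, and $q\in\mathbb{R}$. Let $G^\ast$ be a conditional guessing function that is optimal under $q$-non-extensivity, i.e. for every $y\in\mathcal{Y}$ and $x,x'\in\mathcal{X}$, $G^\ast(x|y)<G^\ast(x'|y)$ implies $P_q(x|y)\ge P_q(x'|y)$. Then for every $\rho>0$, $$ E_q[G^\ast(X|Y)^\rho]\;\leq\;\sum_{y\in\mathcal{Y}}P_q(\cdot,y)\left[\sum_{x\in\mathcal{X}}P_q(x|y)^{\frac{1}{1+\rho}}\right]^{1+\rho} =\frac{\sum_{y\in\mathcal{Y}}\left[\sum_{x\in\mathcal{X}}P(x,y)^{\frac{q}{1+\rho}}\right]^{1+\rho}}{\sum_{y\in\mathcal{Y}}\sum_{x\in\mathcal{X}}P(x,y)^q}. $$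
   Context: A conditional guessing function is a map $G(\cdot|\cdot)$ on $\mathcal{X}\times\mathcal{Y}$ such that for each $y$, $x\mapsto G(x|y)$ is a bijection from $\mathcal{X}$ onto $\{1,\dots,|\mathcal{X}|\}$. The $q$-normalized expectation under $P$ is $E_q[F(X,Y)]=\frac{\sum_{x,y}F(x,y)P(x,y)^q}{\sum_{x,y}P(x,y)^q}$. Escort distributions: $P(x|y)=P(x,y)/\sum_{x'}P(x',y)$; $P_q(x|y)=\frac{P(x|y)^q}{\sum_{x'\in\mathcal{X}}P(x'|y)^q}$; $P_q(\cdot,y)=\frac{\sum_{x\in\mathcal{X}}P(x,y)^q}{\sum_{x'\in\mathcal{X},y'\in\mathcal{Y}}P(x',y')^q}$. *)

From Stdlib Require Import Reals List.
Open Scope R_scope.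

(* Finite sets X = {0,...,nx-1}, Y = {0,...,ny-1}; finite sum over {0..n-1}. *)
Definition fsum (n : nat) (f : nat -> R) : R :=
  fold_right Rplus 0 (map f (seq 0 n)).

Definition is_pos_joint_pmf (nx ny : nat) (P : nat -> nat -> R) : Prop :=
  (forall x y, (x < nx)%nat -> (y < ny)%nat -> 0 < P x y) /\
  fsum ny (fun y => fsum nx (fun x => P x y)) = 1.

Definition is_cond_guessing (nx ny : nat) (G : nat -> nat -> nat) : Prop :=
  forall y, (y < ny)%nat ->
    (forall x, (x < nx)%nat -> (1 <= G x y <= nx)%nat) /\
    (forall x x', (x < nx)%nat -> (x' < nx)%nat -> G x y = G x' y -> x = x') /\
    (forall k, (1 <= k <= nx)%nat -> exists x, (x < nx)%nat /\ G x y = k).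

Definition Pcond (nx : nat) (P : nat -> nat -> R) (x y : nat) : R :=
  P x y / fsum nx (fun x' => P x' y).

Definition Pq_cond (nx : nat) (P : nat -> nat -> R) (q : R) (x y : nat) : R :=
  Rpower (Pcond nx P x y) q / fsum nx (fun x' => Rpower (Pcond nx P x' y) q).

Definition Pq_marg (nx ny : nat) (P : nat -> nat -> R) (q : R) (y : nat) : R :=
  fsum nx (fun x => Rpower (P x y) q) /
  fsum ny (fun y' => fsum nx (fun x => Rpower (P x y') q)).

Definition Eq_exp (nx ny : nat) (P : nat -> nat -> R) (q : R)
  (F : nat -> nat -> R) : R :=
  fsum ny (fun y => fsum nx (fun x => F x y * Rpower (P x y) q)) /
  fsum ny (fun y => fsum nx (fun x => Rpower (P x y) q)).

(* Fix y and write p(x) = P_q(x|y).  Because the guesses are ordered by decreasing p,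
   the rank G(x) is at most the number of x' with p(x') >= p(x), hence
   G(x) p(x)^(1/(1+rho)) <= sum_x' p(x')^(1/(1+rho)) (Arikan's argument).  Raising this
   to the power rho and multiplying by p(x)^(1/(1+rho)) bounds G(x)^rho p(x), and summing
   over x gives E[G^rho | y] <= (sum_x p(x)^(1/(1+rho)))^(1+rho).  Since
   P_q(x|y) = P(x,y)^q / sum_x' P(x',y)^q, averaging over y with the escort marginal
   yields both the bound and its closed form. *)

From Stdlib Require Import Reals List Permutation Lra Lia.
Open Scope R_scope.

Lemma fold_right_Rplus_init (l : list R) (a : R) :
  fold_right Rplus a l = fold_right Rplus 0 l + a.
Proof. induction l as [|b l IH]; simpl; [lra | rewrite IH; lra]. Qed.

Lemma fsum_0 (f : nat -> R) : fsum 0 f = 0.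
Proof. reflexivity. Qed.

Lemma fsum_S (n : nat) (f : nat -> R) : fsum (S n) f = fsum n f + f n.
Proof.
  unfold fsum. rewrite seq_S, map_app, fold_right_app; simpl.
  rewrite fold_right_Rplus_init. lra.
Qed.

Lemma fsum_ext (n : nat) (f g : nat -> R) :
  (forall i, (i < n)%nat -> f i = g i) -> fsum n f = fsum n g.
Proof.
  induction n as [|n IH]; intros Hfg; [reflexivity|].
  rewrite !fsum_S, IH, Hfg; auto.
Qed.

Lemma fsum_le (n : nat) (f g : nat -> R) :
  (forall i, (i < n)%nat -> f i <= g i) -> fsum n f <= fsum n g.
Proof.
  induction n as [|n IH]; intros Hfg; [rewrite !fsum_0; lra|].
  rewrite !fsum_S. apply Rplus_le_compat; auto.
Qed.

Lemma fsum_mult_l (n : nat) (c : R) (f : nat -> R) :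
  fsum n (fun i => c * f i) = c * fsum n f.
Proof.
  induction n as [|n IH]; [rewrite !fsum_0; lra|].
  rewrite !fsum_S, IH. lra.
Qed.

Lemma fsum_div_r (n : nat) (c : R) (f : nat -> R) :
  fsum n (fun i => f i / c) = fsum n f / c.
Proof.
  unfold Rdiv. rewrite Rmult_comm, <- fsum_mult_l.
  apply fsum_ext; intros; lra.
Qed.

Lemma fsum_pos (n : nat) (f : nat -> R) :
  (0 < n)%nat -> (forall i, (i < n)%nat -> 0 < f i) -> 0 < fsum n f.
Proof.
  induction n as [|n IH]; intros Hn Hf; [lia|].
  rewrite fsum_S. destruct n as [|n].
  - rewrite fsum_0. assert (0 < f 0%nat) by (apply Hf; lia). lra.
  - assert (0 < fsum (S n) f) by (apply IH; [lia | intros; apply Hf; lia]).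
    assert (0 < f (S n)) by (apply Hf; lia). lra.
Qed.

(* An injection of [0, n) into [1, n] is a bijection, so it merely permutes the terms. *)
Lemma fsum_reindex (n : nat) (g : nat -> nat) (h : nat -> R) :
  (forall i, (i < n)%nat -> (1 <= g i <= n)%nat) ->
  (forall i j, (i < n)%nat -> (j < n)%nat -> g i = g j -> i = j) ->
  fsum n (fun i => h (g i)) = fsum n (fun k => h (S k)).
Proof.
  intros Hrange Hinj. unfold fsum.
  rewrite <- (map_map g h), <- (map_map S h), seq_shift.
  assert (Hperm : Permutation (map g (seq 0 n)) (seq 1 n)).
  { apply NoDup_Permutation_bis.
    - apply FinFun.Injective_map_NoDup_in; [|apply seq_NoDup].
      intros i j Hi Hj. apply in_seq in Hi, Hj. apply Hinj; lia.
    - rewrite length_map, !length_seq. lia.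
    - intros k Hk. apply in_map_iff in Hk as [i [<- Hi]].
      apply in_seq in Hi. apply in_seq. specialize (Hrange i ltac:(lia)). lia. }
  apply (Permutation_map h) in Hperm.
  induction Hperm; simpl; lra.
Qed.

Lemma fsum_count_le (n m : nat) :
  fsum n (fun k => if Nat.leb (S k) m then 1 else 0) = INR (Nat.min n m).
Proof.
  induction n as [|n IH]; [reflexivity|].
  rewrite fsum_S, IH. destruct (Nat.leb_spec (S n) m).
  - replace (Nat.min (S n) m) with (S (Nat.min n m)) by lia. rewrite S_INR. lra.
  - replace (Nat.min (S n) m) with (Nat.min n m) by lia. lra.
Qed.

Lemma Rpower_pos (x y : R) : 0 < Rpower x y.
Proof. apply exp_pos. Qed.

Lemma Rpower_div (a b c : R) :
  0 < a -> 0 < b -> Rpower (a / b) c = Rpower a c / Rpower b c.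
Proof.
  intros Ha Hb. unfold Rpower, Rdiv.
  rewrite ln_mult, ln_Rinv by auto using Rinv_0_lt_compat.
  rewrite <- exp_Ropp, <- exp_plus. f_equal. ring.
Qed.

Section Guessing.

Variables (n : nat) (g : nat -> nat) (p : nat -> R).

Hypothesis g_range : forall i, (i < n)%nat -> (1 <= g i <= n)%nat.
Hypothesis g_inj : forall i j, (i < n)%nat -> (j < n)%nat -> g i = g j -> i = j.
Hypothesis p_pos : forall i, (i < n)%nat -> 0 < p i.
Hypothesis p_antitone : forall i j, (i < n)%nat -> (j < n)%nat ->
  (g i < g j)%nat -> p i >= p j.

Lemma rank_eq_count (i : nat) : (i < n)%nat ->
  INR (g i) = fsum n (fun j => if Nat.leb (g j) (g i) then 1 else 0).
Proof.
  intros Hi.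
  rewrite (fsum_reindex n g (fun k => if Nat.leb k (g i) then 1 else 0)) by auto.
  rewrite fsum_count_le. specialize (g_range i Hi). f_equal. lia.
Qed.

Lemma rank_mul_Rpower_le (s : R) (i : nat) : 0 <= s -> (i < n)%nat ->
  INR (g i) * Rpower (p i) s <= fsum n (fun j => Rpower (p j) s).
Proof.
  intros Hs Hi. rewrite rank_eq_count, Rmult_comm, <- fsum_mult_l by exact Hi.
  apply fsum_le. intros j Hj. destruct (Nat.leb_spec (g j) (g i)) as [Hle | Hgt].
  - rewrite Rmult_1_r. destruct (Nat.eq_dec (g j) (g i)) as [Heq | Hneq].
    + rewrite (g_inj j i Hj Hi Heq). lra.
    + apply Rle_Rpower_l; [exact Hs|]. split; [auto|].
      specialize (p_antitone j i Hj Hi ltac:(lia)). lra.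
  - rewrite Rmult_0_r. left. apply Rpower_pos.
Qed.

Lemma guessing_moment_le (rho : R) : (0 < n)%nat -> 0 < rho ->
  fsum n (fun i => Rpower (INR (g i)) rho * p i)
    <= Rpower (fsum n (fun i => Rpower (p i) (1 / (1 + rho)))) (1 + rho).
Proof.
  intros Hn Hrho.
  set (s := 1 / (1 + rho)).
  set (T := fsum n (fun i => Rpower (p i) s)).
  assert (Hs : 0 < s) by (unfold s; apply Rdiv_lt_0_compat; lra).
  assert (HT : 0 < T) by (apply fsum_pos; auto; intros; apply Rpower_pos).
  assert (Hterm : forall i, (i < n)%nat ->
    Rpower (INR (g i)) rho * p i <= Rpower T rho * Rpower (p i) s).
  { intros i Hi.
    assert (Hg : 0 < INR (g i)) by (apply lt_0_INR; specialize (g_range i Hi); lia).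
    assert (Hsplit : p i = Rpower (p i) s * Rpower (Rpower (p i) s) rho).
    { rewrite Rpower_mult, <- Rpower_plus.
      replace (s + s * rho) with 1 by (unfold s; field; lra).
      rewrite Rpower_1; auto. }
    rewrite Hsplit at 1.
    replace (Rpower (INR (g i)) rho * (Rpower (p i) s * Rpower (Rpower (p i) s) rho))
      with (Rpower (INR (g i) * Rpower (p i) s) rho * Rpower (p i) s)
      by (rewrite <- Rpower_mult_distr by auto using Rpower_pos; ring).
    apply Rmult_le_compat_r; [left; apply Rpower_pos|].
    apply Rle_Rpower_l; [lra|]. split.
    - apply Rmult_lt_0_compat; auto using Rpower_pos.
    - apply rank_mul_Rpower_le; [lra | exact Hi]. }
  eapply Rle_trans; [apply fsum_le, Hterm|].
  rewrite fsum_mult_l. fold T. rewrite Rpower_plus, Rpower_1 by exact HT. lra.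
Qed.

End Guessing.

Definition escort_mass (nx : nat) (P : nat -> nat -> R) (q : R) (y : nat) : R :=
  fsum nx (fun x => Rpower (P x y) q).

Lemma escort_mass_pos (nx : nat) (P : nat -> nat -> R) (q : R) (y : nat) :
  (0 < nx)%nat -> 0 < escort_mass nx P q y.
Proof. intros Hn. apply fsum_pos; auto using Rpower_pos. Qed.

Lemma pos_joint_pmf_nonempty (nx ny : nat) (P : nat -> nat -> R) :
  is_pos_joint_pmf nx ny P -> (0 < nx)%nat /\ (0 < ny)%nat.
Proof.
  intros [_ Hsum]. split.
  - destruct nx; [exfalso | lia].
    rewrite (fsum_ext ny _ (fun _ => 0 * 0)) in Hsum by (intros; rewrite fsum_0; ring).
    rewrite fsum_mult_l in Hsum. lra.
  - destruct ny; [exfalso; rewrite fsum_0 in Hsum; lra | lia].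
Qed.

(* The normalisation of P(.|y) cancels in the escort distribution. *)
Lemma Pq_cond_escort (nx : nat) (P : nat -> nat -> R) (q : R) (x y : nat) :
  (x < nx)%nat -> (forall x', (x' < nx)%nat -> 0 < P x' y) ->
  Pq_cond nx P q x y = Rpower (P x y) q / escort_mass nx P q y.
Proof.
  intros Hx Hpos. unfold Pq_cond, Pcond, escort_mass.
  assert (Hn : (0 < nx)%nat) by lia.
  set (S := fsum nx (fun x' => P x' y)).
  assert (HS : 0 < S) by (apply fsum_pos; auto).
  rewrite (fsum_ext nx _ (fun x' => Rpower (P x' y) q / Rpower S q))
    by (intros; apply Rpower_div; auto).
  rewrite fsum_div_r, Rpower_div by auto.
  assert (0 < Rpower S q) by apply Rpower_pos.
  assert (0 < fsum nx (fun x' => Rpower (P x' y) q)) by (apply fsum_pos; auto using Rpower_pos).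
  field. lra.
Qed.

Lemma escort_mass_mul_Pq_cond_sum_Rpower (nx : nat) (P : nat -> nat -> R) (q rho : R) (y : nat) :
  (0 < nx)%nat -> 0 < rho -> (forall x, (x < nx)%nat -> 0 < P x y) ->
  escort_mass nx P q y *
    Rpower (fsum nx (fun x => Rpower (Pq_cond nx P q x y) (1 / (1 + rho)))) (1 + rho)
  = Rpower (fsum nx (fun x => Rpower (P x y) (q / (1 + rho)))) (1 + rho).
Proof.
  intros Hn Hrho Hpos.
  set (A := escort_mass nx P q y).
  assert (HA : 0 < A) by (apply escort_mass_pos; exact Hn).
  rewrite (fsum_ext nx _ (fun x => Rpower (P x y) (q / (1 + rho)) / Rpower A (1 / (1 + rho)))).
  2:{ intros x Hx. rewrite Pq_cond_escort, Rpower_div, Rpower_mult by auto using Rpower_pos.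
      f_equal. f_equal. field. lra. }
  assert (HB : 0 < fsum nx (fun x => Rpower (P x y) (q / (1 + rho))))
    by (apply fsum_pos; auto using Rpower_pos).
  rewrite fsum_div_r, Rpower_div, Rpower_mult by auto using Rpower_pos.
  replace (1 / (1 + rho) * (1 + rho)) with 1 by (field; lra).
  rewrite Rpower_1 by exact HA. field. lra.
Qed.

Lemma cond_guessing_moment_le (nx : nat) (P : nat -> nat -> R) (q rho : R)
  (G : nat -> nat -> nat) (y : nat) :
  (0 < nx)%nat -> 0 < rho ->
  (forall x, (x < nx)%nat -> 0 < P x y) ->
  (forall x, (x < nx)%nat -> (1 <= G x y <= nx)%nat) ->
  (forall x x', (x < nx)%nat -> (x' < nx)%nat -> G x y = G x' y -> x = x') ->
  (forall x x', (x < nx)%nat -> (x' < nx)%nat ->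
     (G x y < G x' y)%nat -> Pq_cond nx P q x y >= Pq_cond nx P q x' y) ->
  fsum nx (fun x => Rpower (INR (G x y)) rho * Rpower (P x y) q)
    <= escort_mass nx P q y *
       Rpower (fsum nx (fun x => Rpower (Pq_cond nx P q x y) (1 / (1 + rho)))) (1 + rho).
Proof.
  intros Hn Hrho Hpos Hrange Hinj Hopt.
  set (A := escort_mass nx P q y).
  assert (HA : 0 < A) by (apply escort_mass_pos; exact Hn).
  rewrite (fsum_ext nx _ (fun x => A * (Rpower (INR (G x y)) rho * Pq_cond nx P q x y))).
  2:{ intros x Hx. rewrite Pq_cond_escort by auto. fold A. field. lra. }
  rewrite fsum_mult_l. apply Rmult_le_compat_l; [lra|].
  apply (guessing_moment_le nx (fun x => G x y)); auto.
  intros x Hx. rewrite Pq_cond_escort by auto.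
  apply Rdiv_lt_0_compat; auto using Rpower_pos, escort_mass_pos.
Qed.

Theorem theorem3 (nx ny : nat) (P : nat -> nat -> R) (q : R)
  (G : nat -> nat -> nat)
  (HP : is_pos_joint_pmf nx ny P)
  (HG : is_cond_guessing nx ny G)
  (Hopt : forall y x x', (y < ny)%nat -> (x < nx)%nat -> (x' < nx)%nat ->
     (G x y < G x' y)%nat -> Pq_cond nx P q x y >= Pq_cond nx P q x' y)
  (rho : R) (Hrho : 0 < rho) :
  Eq_exp nx ny P q (fun x y => Rpower (INR (G x y)) rho)
    <= fsum ny (fun y => Pq_marg nx ny P q y *
         Rpower (fsum nx (fun x => Rpower (Pq_cond nx P q x y) (1 / (1 + rho))))
                (1 + rho))
  /\
  fsum ny (fun y => Pq_marg nx ny P q y *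
         Rpower (fsum nx (fun x => Rpower (Pq_cond nx P q x y) (1 / (1 + rho))))
                (1 + rho))
    = fsum ny (fun y => Rpower (fsum nx (fun x => Rpower (P x y) (q / (1 + rho))))
                               (1 + rho))
      / fsum ny (fun y => fsum nx (fun x => Rpower (P x y) q)).
Proof.
  destruct (pos_joint_pmf_nonempty nx ny P HP) as [Hnx Hny].
  destruct HP as [Hpos _].
  set (Z := fsum ny (escort_mass nx P q)).
  assert (HZ : 0 < Z) by (apply fsum_pos; auto using escort_mass_pos).
  assert (Hmarg : forall y, Pq_marg nx ny P q y = escort_mass nx P q y / Z) by reflexivity.
  split.
  - rewrite (fsum_ext ny _ (fun y => escort_mass nx P q y *
      Rpower (fsum nx (fun x => Rpower (Pq_cond nx P q x y) (1 / (1 + rho)))) (1 + rho) / Z))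
      by (intros; rewrite Hmarg; field; lra).
    unfold Eq_exp. fold (escort_mass nx P q) Z.
    rewrite fsum_div_r. apply Rmult_le_compat_r; [left; apply Rinv_0_lt_compat, HZ|].
    apply fsum_le. intros y Hy. destruct (HG y Hy) as [Hrange [Hinj _]].
    apply cond_guessing_moment_le; auto.
  - fold (escort_mass nx P q) Z. rewrite <- fsum_div_r. apply fsum_ext. intros y Hy.
    rewrite Hmarg, <- (escort_mass_mul_Pq_cond_sum_Rpower nx P q rho y) by auto. field. lra.
Qed.
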